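(* The doctrine $\mathbb P\Gamma:\mathbf{PAsm}^{op}\to\mathbf{InfSL}$ satisfies the Type-theoretic Church's Thesis $(\mathbf{TCT})$.
   Context: Write $\varphi_e$ for the $e$-th partial recursive function and $\langle n,m\rangle$ for a recursive pairing. $\mathbf{PAsm}$ is the category of partitioned assemblies: objects are pairs $(P,T)$ with $P$ a set and $T:P\to\mathbb N$ a function; arrows $f:(P,T)\to(P',T')$ are functions $f:P\to P'$ such that some $t\in\mathbb N$ tracks $f$, i.e. for all $x\in P$, $\varphi_t(T(x))$ is defined and equals $T'(f(x))$. Products are $(P\times M,\,(x,y)\mapsto\langle T(x),S(y)\rangle)$; $\mathbf N=(\mathbb N,\mathrm{id})$ with zero and successor is a parameterized natural number object; a weak exponential of $\mathbf N$ with $\mathbf N$ is $(W,V)$, $W=\{(g,t)\in\mathbb N^{\mathbb N}\times\mathbb N\mid t\text{ tracks }g\}$, $V(g,t)=t$, with weak evaluation $ev((g,t),x)=g(x)$. $\mathbb P\Gamma$ sends $(P,T)$ to the powerset of $P$ and acts on arrows by inverse image; it is a (boolean) hyperdoctrine whose equality predicates are diagonals and whose quantifiers are the set-theoretic ones. Let $T:\mathbf N\times\mathbf N\times\mathbf N\to\mathbf N$ and $U:\mathbf N\to\mathbf N$ denote arrows representing Kleene's primitive recursive T-predicate (as a 0/1-valued function) and result-extraction function. For a weak evaluation $ev:W\times\mathbf N\to\mathbf N$ let $\overline{ev}(e,x,y,f)$ be the formula $T(e,x,y)=_{\mathbf N}s(0)\wedge U(y)=_{\mathbf N}ev(f,x)$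 and $\mathbf{Rec}(f)$ be $\exists e:\mathbf N.\forall x:\mathbf N.\exists y:\mathbf N.\overline{ev}(e,x,y,f)$. A doctrine with a parameterized natural number object satisfies $(\mathbf{TCT})$ if for some weak exponential $W$ of $\mathbf N$ with $\mathbf N$ and weak evaluation $ev$ one has $\vdash\forall f:W.\mathbf{Rec}(f)$ (i.e. the top element of the fibre over the terminal object lies below this sentence). *)

From Stdlib Require Import Arith Cantor.

Definition pair (n m : nat) : nat := Cantor.to_nat (n, m).
Definition unpair (n : nat) : nat * nat := Cantor.of_nat n.

(* Partial recursive functions (unary, over the Cantor pairing):          *)
Inductive code : Type :=
| CZero
| CSucc
| CId
| CFst
| CSnd
| CPair (f g : code)
| CComp (f g : code)         (* x |-> f (g x) *)
| CRec (f g : code)          (* <u,0> |-> f u ; <u,n+1> |-> g <u,<n, r(u,n)>> *)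
| CMu (f : code).            (* x |-> least i with f <x,i> = 0 (all earlier defined) *)

(* Goedel numbering: decoding numbers into codes (every code is hit). *)
Fixpoint decode_fuel (fuel n : nat) : code :=
  match fuel with
  | 0 => CZero
  | S fu =>
    let (t, r) := unpair n in
    match t with
    | 0 => CZero
    | 1 => CSucc
    | 2 => CId
    | 3 => CFst
    | 4 => CSnd
    | 5 => let (a, b) := unpair r in CPair (decode_fuel fu a) (decode_fuel fu b)
    | 6 => let (a, b) := unpair r in CComp (decode_fuel fu a) (decode_fuel fu b)
    | 7 => let (a, b) := unpair r in CRec (decode_fuel fu a) (decode_fuel fu b)
    | 8 => CMu (decode_fuel fu r)
    | _ => CZero
    end
  end.

Definition decode (n : nat) : code := decode_fuel (S n) n.

Fixpoint evalk (k : nat) (c : code) (x : nat) : option nat :=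
  match k with
  | 0 => None
  | S k' =>
    match c with
    | CZero => Some 0
    | CSucc => Some (S x)
    | CId => Some x
    | CFst => Some (fst (unpair x))
    | CSnd => Some (snd (unpair x))
    | CPair f g =>
        match evalk k' f x with
        | Some a => match evalk k' g x with
                    | Some b => Some (pair a b)
                    | None => None end
        | None => None end
    | CComp f g =>
        match evalk k' g x with
        | Some b => evalk k' f b
        | None => None end
    | CRec f g =>
        let (u, n) := unpair x in
        (fix go (m : nat) : option nat :=
           match m with
           | 0 => evalk k' f u
           | S m' => match go m' with
                     | Some r => evalk k' g (pair u (pair m' r))
                     | None => None end
           end) n
    | CMu f =>
        (fix srch (j i : nat) : option nat :=
           match j with
           | 0 => None
           | S j' => match evalk k' f (pair x i) with
                     | Some 0 => Some i
                     | Some _ => srch j' (S i)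
                     | None => None end
           end) k' 0
    end
  end.

Definition phi (e x y : nat) : Prop := exists k, evalk k (decode e) x = Some y.

(* y = <k, r> codes a halting computation of e on x, within k steps,      *)
(* with result r.                                                          *)
Definition kleeneT (e x y : nat) : nat :=
  let (k, r) := unpair y in
  match evalk k (decode e) x with
  | Some r' => if Nat.eqb r' r then 1 else 0
  | None => 0
  end.
Definition kleeneU (y : nat) : nat := snd (unpair y).

Record PAsm : Type := mkPAsm { carrier : Type; real : carrier -> nat }.

Definition tracks (X Y : PAsm) (f : carrier X -> carrier Y) (t : nat) : Prop :=
  forall x : carrier X, phi t (real X x) (real Y (f x)).

Definition is_arrow (X Y : PAsm) (f : carrier X -> carrier Y) : Prop :=
  exists t, tracks X Y f t.

Definition prodA (X Y : PAsm) : PAsm :=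
  mkPAsm (carrier X * carrier Y)%type (fun p => pair (real X (fst p)) (real Y (snd p))).

Definition NN : PAsm := mkPAsm nat (fun n => n).

Definition is_weak_exp_NN (W : PAsm) (ev : carrier (prodA W NN) -> carrier NN) : Prop :=
  is_arrow (prodA W NN) NN ev /\
  forall (X : PAsm) (h : carrier (prodA X NN) -> carrier NN),
    is_arrow (prodA X NN) NN h ->
    exists k : carrier X -> carrier W,
      is_arrow X W k /\ forall (a : carrier X) (x : nat), ev (k a, x) = h (a, x).

Definition PGamma (X : PAsm) : Type := carrier X -> Prop.

(* Interpretation of Rec(f) in P Gamma (set-theoretic quantifiers,        *)
(* equality = diagonal).                                                   *)
Definition Rec (W : PAsm) (ev : carrier (prodA W NN) -> carrier NN) : PGamma W :=
  fun f => exists e : nat, forall x : nat, exists y : nat,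
             kleeneT e x y = S 0 /\ kleeneU y = ev (f, x).

(* (TCT) for P Gamma: for some weak exponential, top <= forall f:W. Rec(f)  *)
(* in the fibre over the terminal object (= powerset of a singleton).       *)
Definition TCT_PGamma : Prop :=
  exists (W : PAsm) (ev : carrier (prodA W NN) -> carrier NN),
    is_weak_exp_NN W ev /\ forall f : carrier W, Rec W ev f.

(* A weak exponential of N with N is given by the total functions g equipped with an
   index w for a fixed universal code u, i.e. u computes g x from <w, x>; the index is the
   realizer. Evaluation is then tracked by u itself, and an arrow h : X x N -> N tracked by t
   transposes to a |-> (h(a, -), <t, r a>) with r a the realizer of a. Each such g is computed
   by "u after x |-> <w, x>", so Kleene's normal form gives Rec(g).
   The universal code runs a stack machine for codes, whose step function is primitive
   recursive: it mu-searches the first number of steps after which the machine has halted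
   and reads the result off the final state. *)

From Stdlib Require Import Arith Cantor Lia Wf_nat.

Lemma unpair_pair (a b : nat) : unpair (pair a b) = (a, b).
Proof. apply Cantor.cancel_of_to. Qed.

Lemma pair_ge (a b : nat) : a + b <= pair a b.
Proof. unfold pair. pose proof (Cantor.to_nat_non_decreasing a b). lia. Qed.

Definition p1 (n : nat) : nat := fst (unpair n).
Definition p2 (n : nat) : nat := snd (unpair n).

Lemma p1_pair (a b : nat) : p1 (pair a b) = a.
Proof. unfold p1. now rewrite unpair_pair. Qed.

Lemma p2_pair (a b : nat) : p2 (pair a b) = b.
Proof. unfold p2. now rewrite unpair_pair. Qed.

(* Keeps unification (notably in [solve_computable]) from unfolding the Cantor pairing. *)
Opaque pair unpair.

Fixpoint rec_run (Ef Eg : nat -> option nat) (u m : nat) : option nat :=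
  match m with
  | 0 => Ef u
  | S m' => match rec_run Ef Eg u m' with
            | Some r => Eg (pair u (pair m' r))
            | None => None
            end
  end.

Fixpoint mu_search (E : nat -> option nat) (x j i : nat) : option nat :=
  match j with
  | 0 => None
  | S j' => match E (pair x i) with
            | Some 0 => Some i
            | Some _ => mu_search E x j' (S i)
            | None => None
            end
  end.

Lemma evalk_rec k f g x :
  evalk (S k) (CRec f g) x = rec_run (evalk k f) (evalk k g) (p1 x) (p2 x).
Proof.
  unfold p1, p2; simpl; destruct (unpair x) as [u n]; simpl.
  induction n as [|n IH]; simpl; [reflexivity|now rewrite IH].
Qed.

Lemma evalk_mu k f x : evalk (S k) (CMu f) x = mu_search (evalk k f) x k 0.
Proof.
  simpl. set (E := evalk k f); clearbody E. generalize 0.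
  induction k as [|k IH]; intro i; simpl; [reflexivity|].
  destruct (E (pair x i)) as [[|]|]; auto.
Qed.

Lemma evalk_pair k f g x : evalk (S k) (CPair f g) x =
  match evalk k f x with
  | Some a => match evalk k g x with Some b => Some (pair a b) | None => None end
  | None => None
  end.
Proof. reflexivity. Qed.

Lemma evalk_comp k f g x :
  evalk (S k) (CComp f g) x = match evalk k g x with Some b => evalk k f b | None => None end.
Proof. reflexivity. Qed.

Definition extends (E E' : nat -> option nat) : Prop :=
  forall z v, E z = Some v -> E' z = Some v.

Lemma rec_run_extends Ef Eg Ef' Eg' u m r :
  extends Ef Ef' -> extends Eg Eg' -> rec_run Ef Eg u m = Some r -> rec_run Ef' Eg' u m = Some r.
Proof.
  intros Hf Hg. revert r. induction m as [|m IH]; intros r H; simpl in *; [auto|].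
  destruct (rec_run Ef Eg u m) eqn:E; [|discriminate].
  rewrite (IH _ eq_refl). auto.
Qed.

Lemma mu_search_extends E E' x j j' i y :
  extends E E' -> j <= j' -> mu_search E x j i = Some y -> mu_search E' x j' i = Some y.
Proof.
  intros HE. revert j' i. induction j as [|j IH]; intros j' i Hj H; simpl in H; [discriminate|].
  destruct j' as [|j']; [lia|]. simpl.
  destruct (E (pair x i)) as [[|v]|] eqn:Ez; [| |discriminate]; rewrite (HE _ _ Ez).
  - exact H.
  - apply IH; [lia|exact H].
Qed.

Lemma evalk_extends_S k c : extends (evalk k c) (evalk (S k) c).
Proof.
  revert c. induction k as [|k IH]; intros c x y H; [discriminate|].
  destruct c; try exact H.
  - rewrite evalk_pair in H |- *.
    destruct (evalk k c1 x) eqn:E1; [|discriminate].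
    destruct (evalk k c2 x) eqn:E2; [|discriminate].
    now rewrite (IH _ _ _ E1), (IH _ _ _ E2).
  - rewrite evalk_comp in H |- *.
    destruct (evalk k c2 x) eqn:E2; [|discriminate].
    rewrite (IH _ _ _ E2). now apply IH.
  - rewrite evalk_rec in H |- *. exact (rec_run_extends _ _ _ _ _ _ _ (IH c1) (IH c2) H).
  - rewrite evalk_mu in H |- *.
    exact (mu_search_extends _ _ _ _ _ _ _ (IH c) (le_S _ _ (le_n _)) H).
Qed.

Lemma evalk_extends k k' c : k <= k' -> extends (evalk k c) (evalk k' c).
Proof. induction 1; intros x y E; [exact E|]. apply evalk_extends_S; auto. Qed.

Definition runs (c : code) (x y : nat) : Prop := exists k, evalk k c x = Some y.

Lemma runs_pair f g x a b : runs f x a -> runs g x b -> runs (CPair f g) x (pair a b).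
Proof.
  intros [k1 E1] [k2 E2]. exists (S (max k1 k2)). rewrite evalk_pair.
  now rewrite (evalk_extends k1 _ _ (Nat.le_max_l _ _) _ _ E1),
              (evalk_extends k2 _ _ (Nat.le_max_r _ _) _ _ E2).
Qed.

Lemma runs_comp f g x b y : runs g x b -> runs f b y -> runs (CComp f g) x y.
Proof.
  intros [k2 E2] [k1 E1]. exists (S (max k1 k2)). rewrite evalk_comp.
  rewrite (evalk_extends k2 _ _ (Nat.le_max_r _ _) _ _ E2).
  exact (evalk_extends k1 _ _ (Nat.le_max_l _ _) _ _ E1).
Qed.

Fixpoint primrec (f g : nat -> nat) (u n : nat) : nat :=
  match n with
  | 0 => f u
  | S m => g (pair u (pair m (primrec f g u m)))
  end.

Lemma runs_rec cf cg f g u n :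
  (forall z, runs cf z (f z)) -> (forall z, runs cg z (g z)) ->
  runs (CRec cf cg) (pair u n) (primrec f g u n).
Proof.
  intros Hf Hg.
  assert (Hrun : exists k, rec_run (evalk k cf) (evalk k cg) u n = Some (primrec f g u n)).
  { induction n as [|n [k1 E1]]; [exact (Hf u)|].
    destruct (Hg (pair u (pair n (primrec f g u n)))) as [k2 E2].
    exists (max k1 k2). simpl.
    rewrite (rec_run_extends _ _ _ _ _ _ _ (evalk_extends k1 _ _ (Nat.le_max_l _ _))
               (evalk_extends k1 _ _ (Nat.le_max_l _ _)) E1).
    exact (evalk_extends k2 _ _ (Nat.le_max_r _ _) _ _ E2). }
  destruct Hrun as [k E]. exists (S k). now rewrite evalk_rec, p1_pair, p2_pair.
Qed.

Lemma mu_search_finds E x n j i :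
  n < i + j -> i <= n -> (forall l, i <= l < n -> exists v, E (pair x l) = Some (S v)) ->
  E (pair x n) = Some 0 -> mu_search E x j i = Some n.
Proof.
  revert i. induction j as [|j IH]; intros i Hn Hi Hpos H0; [lia|]. simpl.
  destruct (Nat.eq_dec i n) as [->|Hne]; [now rewrite H0|].
  destruct (Hpos i ltac:(lia)) as [v ->]. apply IH; auto; [lia|lia|].
  intros l Hl. apply Hpos. lia.
Qed.

Lemma uniform_fuel c f x n :
  (forall z, runs c z (f z)) ->
  exists k, forall j, j <= n -> evalk k c (pair x j) = Some (f (pair x j)).
Proof.
  intro Hf. induction n as [|n [k1 E1]].
  - destruct (Hf (pair x 0)) as [k E]. exists k. intros j Hj. now replace j with 0 by lia.
  - destruct (Hf (pair x (S n))) as [k2 E2]. exists (max k1 k2). intros j Hj.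
    destruct (Nat.eq_dec j (S n)) as [->|Hne].
    + exact (evalk_extends k2 _ _ (Nat.le_max_r _ _) _ _ E2).
    + exact (evalk_extends k1 _ _ (Nat.le_max_l _ _) _ _ (E1 j ltac:(lia))).
Qed.

Lemma runs_mu c f x n :
  (forall z, runs c z (f z)) -> f (pair x n) = 0 -> (forall j, j < n -> f (pair x j) <> 0) ->
  runs (CMu c) x n.
Proof.
  intros Hf H0 Hpos. destruct (uniform_fuel c f x n Hf) as [k Ek].
  exists (S (max k (S n))). rewrite evalk_mu.
  assert (Ek' : forall j, j <= n -> evalk (max k (S n)) c (pair x j) = Some (f (pair x j)))
    by (intros j Hj; exact (evalk_extends k _ _ (Nat.le_max_l _ _) _ _ (Ek j Hj))).
  apply mu_search_finds; [lia|lia| |now rewrite Ek', H0].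
  intros l Hl. rewrite Ek' by lia.
  destruct (f (pair x l)) eqn:E; [now destruct (Hpos l ltac:(lia))|eauto].
Qed.

Definition computable (f : nat -> nat) : Prop := exists c, forall x, runs c x (f x).

Lemma computable_ext f g : (forall x, f x = g x) -> computable f -> computable g.
Proof. intros Hfg [c Hc]. exists c. intro x. rewrite <- Hfg. apply Hc. Qed.

Lemma computable_basic (c : code) (f : nat -> nat) :
  (forall x, evalk 1 c x = Some (f x)) -> computable f.
Proof. intro H. exists c. intro x. exists 1. apply H. Qed.

Lemma computable_comp f g : computable f -> computable g -> computable (fun x => f (g x)).
Proof.
  intros [cf Hf] [cg Hg]. exists (CComp cf cg). intro x.
  exact (runs_comp _ _ _ _ _ (Hg x) (Hf _)).
Qed.

Lemma computable_id : computable (fun x => x).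
Proof. now apply (computable_basic CId). Qed.

Lemma computable_S f : computable f -> computable (fun x => S (f x)).
Proof. apply (computable_comp S). now apply (computable_basic CSucc). Qed.

Lemma computable_p1 f : computable f -> computable (fun x => p1 (f x)).
Proof. apply (computable_comp p1). now apply (computable_basic CFst). Qed.

Lemma computable_p2 f : computable f -> computable (fun x => p2 (f x)).
Proof. apply (computable_comp p2). now apply (computable_basic CSnd). Qed.

Lemma computable_const n : computable (fun _ => n).
Proof.
  induction n as [|n IH]; [now apply (computable_basic CZero)|].
  exact (computable_S _ IH).
Qed.

Lemma computable_pair f g : computable f -> computable g -> computable (fun x => pair (f x) (g x)).
Proof.
  intros [cf Hf] [cg Hg]. exists (CPair cf cg). intro x.
  exact (runs_pair _ _ _ _ _ (Hf x) (Hg x)).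
Qed.

Lemma computable_primrec f g u n :
  computable f -> computable g -> computable u -> computable n ->
  computable (fun x => primrec f g (u x) (n x)).
Proof.
  intros [cf Hf] [cg Hg] Hu Hn. destruct (computable_pair u n Hu Hn) as [c Hc].
  exists (CComp (CRec cf cg) c). intro x.
  exact (runs_comp _ _ _ _ _ (Hc x) (runs_rec _ _ _ _ _ _ Hf Hg)).
Qed.

Lemma computable_pred n : computable n -> computable (fun x => pred (n x)).
Proof.
  intro Hn. apply (computable_ext (fun x => primrec (fun _ => 0) (fun z => p1 (p2 z)) 0 (n x))).
  - intro x. destruct (n x); simpl; [reflexivity|]. now rewrite p2_pair, p1_pair.
  - apply computable_primrec;
      auto using computable_const, computable_p1, computable_p2, computable_id.
Qed.

Lemma computable_iter f n s :
  computable f -> computable n -> computable s -> computable (fun x => Nat.iter (n x) f (s x)).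
Proof.
  intros Hf Hn Hs.
  apply (computable_ext (fun x => primrec (fun u => u) (fun z => f (p2 (p2 z))) (s x) (n x))).
  - intro x. induction (n x) as [|m IH]; simpl; [reflexivity|]. now rewrite !p2_pair, IH.
  - apply computable_primrec; auto using computable_id.
    apply computable_comp; auto using computable_p2, computable_id.
Qed.

Lemma computable_case t a b :
  computable t -> computable a -> computable (fun x => b x (pred (t x))) ->
  computable (fun x => match t x with 0 => a x | S p => b x p end).
Proof.
  intros Ht Ha Hb.
  apply (computable_ext (fun x => primrec a (fun z => b (p1 z) (pred (t (p1 z)))) x (t x))).
  - intro x. destruct (t x) eqn:E; simpl; [reflexivity|]. now rewrite p1_pair, E.
  - apply computable_primrec; auto using computable_id.
    apply (computable_comp (fun y => b y (pred (t y)))); auto using computable_p1, computable_id.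
Qed.

Ltac solve_computable :=
  repeat (cbv beta zeta; first
    [ apply computable_id | apply computable_const | apply computable_S | apply computable_pred
    | apply computable_p1 | apply computable_p2 | apply computable_pair | apply computable_case
    | apply computable_iter ]).

Fixpoint encode (c : code) : nat :=
  match c with
  | CZero => pair 0 0
  | CSucc => pair 1 0
  | CId => pair 2 0
  | CFst => pair 3 0
  | CSnd => pair 4 0
  | CPair f g => pair 5 (pair (encode f) (encode g))
  | CComp f g => pair 6 (pair (encode f) (encode g))
  | CRec f g => pair 7 (pair (encode f) (encode g))
  | CMu f => pair 8 (encode f)
  end.

Lemma decode_fuel_encode c fuel : encode c < fuel -> decode_fuel fuel (encode c) = c.
Proof.
  revert fuel. induction c; intros [|fuel] Hfuel; try lia; cbn [encode decode_fuel] in *;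
    rewrite unpair_pair; cbv beta iota; try reflexivity;
    match type of Hfuel with pair ?t ?args < _ => pose proof (pair_ge t args) end.
  1-3: pose proof (pair_ge (encode c1) (encode c2));
       rewrite unpair_pair, IHc1, IHc2; [reflexivity|lia|lia].
  rewrite IHc; [reflexivity|lia].
Qed.

Lemma decode_encode c : decode (encode c) = c.
Proof. apply decode_fuel_encode. lia. Qed.

Lemma phi_encode c x y : runs c x y -> phi (encode c) x y.
Proof. unfold phi. now rewrite decode_encode. Qed.

(* States of a stack machine: [Enter d x K] runs the code numbered [d] on [x] under the
   continuation [K], [Return v K] hands [v] to [K]; a continuation is [0] (empty) or a
   frame pushed on a continuation. In [KRec g u m r], [m] iterations of [g] are done and
   [r] remain. *)
Definition Enter (d x K : nat) : nat := pair 0 (pair d (pair x K)).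
Definition Return (v K : nat) : nat := pair 1 (pair v K).
Definition Halt (v : nat) : nat := pair 2 v.

Definition push (frame K : nat) : nat := S (pair frame K).
Definition KPair1 (g x : nat) : nat := pair 0 (pair g x).
Definition KPair2 (a : nat) : nat := pair 1 a.
Definition KComp (f : nat) : nat := pair 2 f.
Definition KRec (g u m r : nat) : nat := pair 3 (pair g (pair u (pair m r))).
Definition KMu (f x i : nat) : nat := pair 4 (pair f (pair x i)).

Definition eval_step (b : nat) : nat :=
  let d := p1 b in let x := p1 (p2 b) in let K := p2 (p2 b) in
  let args := p2 d in
  match p1 d with
  | 0 => Return 0 K
  | 1 => Return (S x) K
  | 2 => Return x K
  | 3 => Return (p1 x) K
  | 4 => Return (p2 x) K
  | 5 => Enter (p1 args) x (push (KPair1 (p2 args) x) K)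
  | 6 => Enter (p2 args) x (push (KComp (p1 args)) K)
  | 7 => Enter (p1 args) (p1 x) (push (KRec (p2 args) (p1 x) 0 (p2 x)) K)
  | 8 => Enter args (pair x 0) (push (KMu args x 0) K)
  | _ => Halt 0 (* no [encode c] has a tag above 8 *)
  end.

Definition ret_step (b : nat) : nat :=
  let v := p1 b in
  match p2 b with
  | 0 => Halt v
  | S K1 =>
    let frame := p1 K1 in let K := p2 K1 in let a := p2 frame in
    match p1 frame with
    | 0 => Enter (p1 a) (p2 a) (push (KPair2 v) K)
    | 1 => Return (pair a v) K
    | 2 => Enter a v K
    | 3 => let g := p1 a in let u := p1 (p2 a) in let m := p1 (p2 (p2 a)) in
           match p2 (p2 (p2 a)) with
           | 0 => Return v K
           | S r => Enter g (pair u (pair m v)) (push (KRec g u (S m) r) K)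
           end
    | 4 => let f := p1 a in let x := p1 (p2 a) in let i := p2 (p2 a) in
           match v with
           | 0 => Return i K
           | S _ => Enter f (pair x (S i)) (push (KMu f x (S i)) K)
           end
    | _ => Halt 0
    end
  end.

Definition step (s : nat) : nat :=
  match p1 s with
  | 0 => eval_step (p2 s)
  | 1 => ret_step (p2 s)
  | _ => s
  end.

Lemma computable_step : computable step.
Proof.
  unfold step, eval_step, ret_step, Enter, Return, Halt, push, KPair1, KPair2, KComp, KRec, KMu.
  solve_computable.
Qed.

Ltac compute_step :=
  unfold step, eval_step, ret_step, Enter, Return, Halt, push, KPair1, KPair2, KComp, KRec, KMu;
  cbn [encode]; repeat progress (rewrite ?p1_pair, ?p2_pair; cbv beta iota zeta).

Lemma step_enter_zero x K : step (Enter (encode CZero) x K) = Return 0 K.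
Proof. now compute_step. Qed.
Lemma step_enter_succ x K : step (Enter (encode CSucc) x K) = Return (S x) K.
Proof. now compute_step. Qed.
Lemma step_enter_id x K : step (Enter (encode CId) x K) = Return x K.
Proof. now compute_step. Qed.
Lemma step_enter_fst x K : step (Enter (encode CFst) x K) = Return (p1 x) K.
Proof. now compute_step. Qed.
Lemma step_enter_snd x K : step (Enter (encode CSnd) x K) = Return (p2 x) K.
Proof. now compute_step. Qed.
Lemma step_enter_pair f g x K :
  step (Enter (encode (CPair f g)) x K) = Enter (encode f) x (push (KPair1 (encode g) x) K).
Proof. now compute_step. Qed.
Lemma step_enter_comp f g x K :
  step (Enter (encode (CComp f g)) x K) = Enter (encode g) x (push (KComp (encode f)) K).
Proof. now compute_step. Qed.
Lemma step_enter_rec f g x K : step (Enter (encode (CRec f g)) x K) =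
  Enter (encode f) (p1 x) (push (KRec (encode g) (p1 x) 0 (p2 x)) K).
Proof. now compute_step. Qed.
Lemma step_enter_mu f x K :
  step (Enter (encode (CMu f)) x K) = Enter (encode f) (pair x 0) (push (KMu (encode f) x 0) K).
Proof. now compute_step. Qed.
Lemma step_return_halt v : step (Return v 0) = Halt v.
Proof. now compute_step. Qed.
Lemma step_return_pair1 v g x K :
  step (Return v (push (KPair1 g x) K)) = Enter g x (push (KPair2 v) K).
Proof. now compute_step. Qed.
Lemma step_return_pair2 v a K : step (Return v (push (KPair2 a) K)) = Return (pair a v) K.
Proof. now compute_step. Qed.
Lemma step_return_comp v f K : step (Return v (push (KComp f) K)) = Enter f v K.
Proof. now compute_step. Qed.
Lemma step_return_rec_done v g u m K : step (Return v (push (KRec g u m 0) K)) = Return v K.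
Proof. now compute_step. Qed.
Lemma step_return_rec_next v g u m r K :
  step (Return v (push (KRec g u m (S r)) K)) =
  Enter g (pair u (pair m v)) (push (KRec g u (S m) r) K).
Proof. now compute_step. Qed.
Lemma step_return_mu v f x i K : step (Return v (push (KMu f x i) K)) =
  match v with 0 => Return i K | S _ => Enter f (pair x (S i)) (push (KMu f x (S i)) K) end.
Proof. now compute_step. Qed.

Definition reaches (s s' : nat) : Prop := exists n, Nat.iter n step s = s'.

Lemma reaches_refl s : reaches s s.
Proof. now exists 0. Qed.

Lemma reaches_trans s1 s2 s3 : reaches s1 s2 -> reaches s2 s3 -> reaches s1 s3.
Proof. intros [n1 H1] [n2 H2]. exists (n2 + n1). rewrite Nat.iter_add. congruence. Qed.

Lemma reaches_step s s' : reaches (step s) s' -> reaches s s'.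
Proof. intros [n H]. exists (S n). now rewrite Nat.iter_succ_r. Qed.

Section Simulation.

Variables (Ef : nat -> option nat) (ef : nat).
Hypothesis sim_f : forall z v K, Ef z = Some v -> reaches (Enter ef z K) (Return v K).

Lemma reaches_rec Eg eg u n K :
  (forall z v K, Eg z = Some v -> reaches (Enter eg z K) (Return v K)) ->
  forall m r, m <= n -> rec_run Ef Eg u m = Some r ->
  reaches (Enter ef u (push (KRec eg u 0 n) K)) (Return r (push (KRec eg u m (n - m)) K)).
Proof.
  intros sim_g. induction m as [|m IH]; intros r Hm H; simpl in H.
  - rewrite Nat.sub_0_r. now apply sim_f.
  - destruct (rec_run Ef Eg u m) as [r'|]; [|discriminate].
    apply (reaches_trans _ _ _ (IH r' ltac:(lia) eq_refl)), reaches_step.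
    replace (n - m) with (S (n - S m)) by lia. rewrite step_return_rec_next. now apply sim_g.
Qed.

Lemma reaches_mu x K j i y : mu_search Ef x j i = Some y ->
  reaches (Enter ef (pair x i) (push (KMu ef x i) K)) (Return y K).
Proof.
  revert i. induction j as [|j IH]; intros i H; simpl in H; [discriminate|].
  destruct (Ef (pair x i)) as [[|v]|] eqn:E; [| |discriminate];
    apply (reaches_trans _ _ _ (sim_f _ _ _ E)), reaches_step; rewrite step_return_mu.
  - injection H as <-. apply reaches_refl.
  - now apply IH.
Qed.

End Simulation.

Lemma machine_simulates k c x y K :
  evalk k c x = Some y -> reaches (Enter (encode c) x K) (Return y K).
Proof.
  revert c x y K. induction k as [|k IH]; intros c x y K H; [discriminate|].
  destruct c; apply reaches_step.
  - injection H as <-. rewrite step_enter_zero. apply reaches_refl.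
  - injection H as <-. rewrite step_enter_succ. apply reaches_refl.
  - injection H as <-. rewrite step_enter_id. apply reaches_refl.
  - injection H as <-. rewrite step_enter_fst. apply reaches_refl.
  - injection H as <-. rewrite step_enter_snd. apply reaches_refl.
  - rewrite evalk_pair in H.
    destruct (evalk k c1 x) as [a|] eqn:E1; [|discriminate].
    destruct (evalk k c2 x) as [b|] eqn:E2; [|discriminate].
    injection H as <-. rewrite step_enter_pair.
    apply (reaches_trans _ _ _ (IH _ _ _ _ E1)), reaches_step. rewrite step_return_pair1.
    apply (reaches_trans _ _ _ (IH _ _ _ _ E2)), reaches_step. rewrite step_return_pair2.
    apply reaches_refl.
  - rewrite evalk_comp in H.
    destruct (evalk k c2 x) as [b|] eqn:E2; [|discriminate].
    rewrite step_enter_comp.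
    apply (reaches_trans _ _ _ (IH _ _ _ _ E2)), reaches_step. rewrite step_return_comp.
    now apply IH.
  - rewrite evalk_rec in H. rewrite step_enter_rec.
    apply (reaches_trans _ _ _ (reaches_rec _ _ (IH c1) _ _ _ _ _ (IH c2) _ _ (le_n _) H)).
    apply reaches_step.
    rewrite Nat.sub_diag, step_return_rec_done. apply reaches_refl.
  - rewrite evalk_mu in H. rewrite step_enter_mu.
    exact (reaches_mu _ _ (IH c) _ _ _ _ _ H).
Qed.

Definition init (w : nat) : nat := Enter (p1 w) (p2 w) 0.
Definition run (w n : nat) : nat := Nat.iter n step (init w).
Definition running (s : nat) : nat := match p1 s with 0 | 1 => 1 | _ => 0 end.

Lemma running_Halt v : running (Halt v) = 0.
Proof. unfold running, Halt. now rewrite p1_pair. Qed.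

Lemma step_stopped s : running s = 0 -> step s = s.
Proof. unfold running, step. now destruct (p1 s) as [|[|]]. Qed.

Lemma run_stopped w n m : running (run w n) = 0 -> n <= m -> run w m = run w n.
Proof.
  intros Hn. induction 1 as [|m _ IH]; [reflexivity|].
  unfold run in *. now rewrite Nat.iter_succ, IH, step_stopped.
Qed.

Lemma run_halts c z y : runs c z y -> exists n, run (pair (encode c) z) n = Halt y.
Proof.
  intros [k Hk]. destruct (machine_simulates k c z y 0 Hk) as [n Hn].
  exists (S n). unfold run, init. now rewrite p1_pair, p2_pair, Nat.iter_succ, Hn, step_return_halt.
Qed.

Lemma interpreter_exists : exists i, forall c z y, runs c z y -> runs i (pair (encode c) z) y.
Proof.
  assert (Hstop : computable (fun q => running (run (p1 q) (p2 q))))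
    by (unfold running, run, init, Enter; solve_computable; exact computable_step).
  assert (Hout : computable (fun q => p2 (run (p1 q) (p2 q))))
    by (unfold run, init, Enter; solve_computable; exact computable_step).
  destruct Hstop as [cstop Hcstop], Hout as [cout Hcout].
  exists (CComp cout (CPair CId (CMu cstop))). intros c z y Hc.
  set (w := pair (encode c) z).
  destruct (run_halts c z y Hc) as [N HN]; fold w in HN.
  destruct (dec_inh_nat_subset_has_unique_least_element (fun n => running (run w n) = 0))
    as [n [[Hn Hleast] _]].
  { intro n. apply Nat.eq_decidable. }
  { exists N. rewrite HN. apply running_Halt. }
  assert (Hrun : run w n = Halt y).
  { rewrite <- HN. symmetry. apply run_stopped; [exact Hn|].
    apply Hleast. rewrite HN. apply running_Halt. }
  apply (runs_comp _ _ _ (pair w n)).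
  - apply runs_pair; [now exists 1|].
    apply (runs_mu _ _ _ _ Hcstop); rewrite ?p1_pair, ?p2_pair; [exact Hn|].
    intros j Hj Hzero. rewrite p1_pair, p2_pair in Hzero. specialize (Hleast j Hzero). lia.
  - specialize (Hcout (pair w n)). rewrite p1_pair, p2_pair, Hrun in Hcout.
    unfold Halt in Hcout. now rewrite p2_pair in Hcout.
Qed.

Definition universal (u : code) : Prop :=
  forall c a x y, runs c (pair a x) y -> runs u (pair (pair (encode c) a) x) y.

Lemma universal_exists : exists u, universal u.
Proof.
  destruct interpreter_exists as [i Hi].
  assert (Hshift : computable (fun q => pair (p1 (p1 q)) (pair (p2 (p1 q)) (p2 q))))
    by solve_computable.
  destruct Hshift as [shift Hshift].
  exists (CComp i shift). intros c a x y Hc.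
  apply (runs_comp _ _ _ _ _ (Hshift _)). rewrite !p1_pair, !p2_pair. now apply Hi.
Qed.

Record uprogram (u : code) : Type := {
  uprogram_fun : nat -> nat;
  uprogram_index : nat;
  uprogram_spec : forall x, runs u (pair uprogram_index x) (uprogram_fun x)
}.
Arguments uprogram_fun {u}.
Arguments uprogram_index {u}.

Definition uprograms (u : code) : PAsm := mkPAsm (uprogram u) uprogram_index.

Definition uapply (u : code) (p : carrier (prodA (uprograms u) NN)) : carrier NN :=
  uprogram_fun (fst p) (snd p).

Lemma computable_index f : computable f -> exists e, forall x, phi e x (f x).
Proof. intros [c Hc]. exists (encode c). intro x. apply phi_encode, Hc. Qed.

Lemma kleene_normal_form e x y : phi e x y -> exists z, kleeneT e x z = 1 /\ kleeneU z = y.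
Proof.
  intros [k Hk]. exists (pair k y). unfold kleeneT, kleeneU.
  rewrite unpair_pair, Hk, Nat.eqb_refl. auto.
Qed.

Lemma uprograms_weak_exp u : universal u -> is_weak_exp_NN (uprograms u) (uapply u).
Proof.
  intro Hu. split.
  - exists (encode u). intros [p x]. apply phi_encode, uprogram_spec.
  - intros X h [t Ht].
    destruct (computable_index (fun n => pair (encode (decode t)) n)) as [e He];
      [solve_computable|].
    exists (fun a => {| uprogram_fun := fun x => h (a, x);
                        uprogram_index := pair (encode (decode t)) (real X a);
                        uprogram_spec := fun x => Hu _ _ _ _ (Ht (a, x)) |}).
    split; [exists e; intro a; apply He|reflexivity].
Qed.

Lemma uprograms_Rec u (p : uprogram u) : Rec (uprograms u) (uapply u) p.
Proof.
  destruct (computable_pair _ _ (computable_const (uprogram_index p)) computable_id) as [c Hc].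
  exists (encode (CComp u c)). intro x.
  apply kleene_normal_form, phi_encode. exact (runs_comp _ _ _ _ _ (Hc x) (uprogram_spec u p x)).
Qed.

Theorem proposition4p5 : TCT_PGamma.
Proof.
  destruct universal_exists as [u Hu].
  exists (uprograms u), (uapply u).
  split; [exact (uprograms_weak_exp u Hu)|apply uprograms_Rec].
Qed.
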